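(* Let $\mathbf{A}=(\mathcal{P},\mathcal{L},\parallel)$ be an affine space over $\mathrm{GF}(2)$ of countably infinite dimension, and let $\mathbf{A}'=(\mathcal{P}',\mathcal{L}',\parallel')$ be an $m$-dimensional affine space, $3\le m\le\aleph_0$, over a countably infinite (skew) field $F'$ of arbitrary characteristic. Then there exists a bijection $\varphi:\mathcal{L}\to\mathcal{L}'$ satisfying $a\sim b\implies a^\varphi\sim' b^\varphi$ for all $a,b\in\mathcal{L}$ such that the associated injection $\lambda:\mathcal{P}\to\mathcal{P}'$, $a\cap b\mapsto a^\varphi\cap b^\varphi$ ($a,b\in\mathcal{L}$ adjacent), is not surjective; indeed, $\varphi$ can be chosen so that there is a set $\mathcal{B}'\subseteq\mathcal{P}'$ containing no three collinear points and meeting every line of $\mathbf{A}'$ in exactly two points, with $\lambda(\mathcal{P})=\mathcal{B}'$.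
   Context: In an affine space, lines $a,b$ are related, $a\sim b$, if $a\cap b\ne\emptyset$, and adjacent if related and distinct; analogously $\sim'$ in $\mathbf{A}'$. In an affine space over $\mathrm{GF}(2)$ every line consists of exactly two points, so lines of $\mathbf{A}$ are exactly the 2-subsets of $\mathcal{P}$. *)

From HB Require Import structures.
From mathcomp Require Import all_boot all_order all_algebra.
Set Implicit Arguments. Unset Strict Implicit. Unset Printing Implicit Defensive.
Import GRing.Theory.
Local Open Scope ring_scope.

Definition skew_field (F : unitRingType) : Prop :=
  forall x : F, x != 0 -> x \is a GRing.unit.

Definition countably_infinite (T : Type) : Prop :=
  exists e : nat -> T, bijective e.

(* Dimension: [Some k] = finite dimension k, [None] = aleph_0. *)
Definition affdim := option nat.

(* Points of the m-dimensional affine space over F: the (left) vector space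
   F^(m) of finitely supported coordinate vectors nat -> F, with support
   contained in {0,...,k-1} when m = Some k. *)
Definition isPt (F : unitRingType) (m : affdim) (v : nat -> F) : Prop :=
  (exists N : nat, forall i : nat, (N <= i)%N -> v i = 0) /\
  (forall k : nat, m = Some k -> forall i : nat, (k <= i)%N -> v i = 0).

Definition isLine (F : unitRingType) (m : affdim) (S : (nat -> F) -> Prop) : Prop :=
  exists p v : nat -> F, isPt m p /\ isPt m v /\ v <> (fun _ => 0) /\
    forall x : nat -> F, S x <-> exists t : F, x = (fun i => p i + t * v i).

Definition related (F : unitRingType) (a b : (nat -> F) -> Prop) : Prop :=
  exists x, a x /\ b x.

Definition adjacent (F : unitRingType) (a b : (nat -> F) -> Prop) : Prop :=
  related a b /\ a <> b.

(* Over GF(2) a line is just a pair of points, so a map [lam] from the countably many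
   points of A into A' induces [phi {p, q} = lam p lam q]; this [phi] preserves meeting,
   and it is a bijection onto the lines of A' as soon as [lam] is injective and its image
   B' meets every line of A' in exactly two points.  Such a B' is built greedily along
   an enumeration of the lines of A' in which every line occurs twice: at step n one adds
   a point of the n-th line (unless that line already carries two points) lying on no line
   joining two earlier points.  It exists because F' is infinite and each of the finitely
   many constraints excludes at most one parameter on the line.  Then lam maps the n-th
   point of A to the n-th point of B'; it is not onto, since a line of A' has infinitely
   many points but only two in B'. *)

From mathcomp Require Import all_boot all_order all_algebra zify.
From Stdlib Require Import PeanoNat Classical ClassicalEpsilon.
From Stdlib Require Import FunctionalExtensionality PropExtensionality.
From Stdlib Require List.
Set Implicit Arguments. Unset Strict Implicit. Unset Printing Implicit Defensive.
Import GRing.Theory.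
Local Open Scope ring_scope.

(* Two parametrizations [P + t V] and [P' + s X] meeting at parameters (t1, s1) and
   (t2, s2) agree along the affine change of parameter through these pairs; the
   scalars act on the left, so the order of the factors matters. *)
Lemma affine_coord_change (R : unitRingType) (P V P' X t1 t2 s1 s2 s : R) :
  (s2 - s1) \is a GRing.unit -> P + t1 * V = P' + s1 * X -> P + t2 * V = P' + s2 * X ->
  P' + s * X = P + (t1 + (s - s1) * ((s2 - s1)^-1 * (t2 - t1))) * V.
Proof.
move=> U H1 H2.
have E : (s2 - s1) * X = (t2 - t1) * V.
  rewrite !mulrBl.
  have -> : s2 * X - s1 * X = (P' + s2 * X) - (P' + s1 * X).
    by rewrite opprD addrACA subrr add0r.
  by rewrite -H1 -H2 opprD addrACA subrr add0r.
have EX : X = (s2 - s1)^-1 * ((t2 - t1) * V) by rewrite -E mulKr.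
have EP : P' = P + t1 * V - s1 * X by rewrite H1 addrK.
rewrite EP (@mulrDl R t1 _ V) -!mulrA -EX mulrBl.
by rewrite -!addrA; congr (_ + (_ + _)); rewrite addrC.
Qed.

Section Lines.

Variable F : unitRingType.

Definition line_of (p v : nat -> F) : (nat -> F) -> Prop :=
  fun x => exists t : F, x = (fun i => p i + t * v i).

Definition line_through (p q : nat -> F) := line_of p (fun i => q i - p i).

Lemma line_of_base (p v : nat -> F) : line_of p v p.
Proof. by exists 0; apply: functional_extensionality => i; rewrite mul0r addr0. Qed.

Lemma line_through_l (p q : nat -> F) : line_through p q p.
Proof. exact: line_of_base. Qed.

Lemma line_through_r (p q : nat -> F) : line_through p q q.
Proof. by exists 1; apply: functional_extensionality => i; rewrite mul1r addrC subrK. Qed.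

Lemma line_of_rebase (p v q : nat -> F) :
  line_of p v q -> forall x, line_of q v x <-> line_of p v x.
Proof.
move=> [t ->] x; split => -[s ->].
  by exists (t + s); apply: functional_extensionality => i; rewrite mulrDl addrA.
exists (s - t); apply: functional_extensionality => i.
by rewrite mulrBl addrCA addrK addrC.
Qed.

Lemma line_through_sym (p q x : nat -> F) : line_through q p x <-> line_through p q x.
Proof.
have E t : (fun i => q i + t * (p i - q i)) = (fun i => p i + (1 - t) * (q i - p i)).
  apply: functional_extensionality => i.
  by rewrite mulrBl mul1r addrA [p i + (q i - _)]addrC subrK -mulrN opprB.
split => -[t ->]; first by exists (1 - t); rewrite E.
by exists (1 - t); rewrite E opprB addrC subrK.
Qed.

Lemma nonzero_coord (v : nat -> F) : v <> (fun _ => 0) -> exists i, v i != 0.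
Proof.
move=> hv; apply: NNPP => H; apply: hv; apply: functional_extensionality => i.
by case: (eqVneq (v i) 0) => // Hi; case: H; exists i.
Qed.

Hypothesis hF : skew_field F.

Lemma line_param_inj (p v : nat -> F) (t1 t2 : F) : v <> (fun _ => 0) ->
  (fun i => p i + t1 * v i) = (fun i => p i + t2 * v i) -> t1 = t2.
Proof.
move=> /nonzero_coord [i hi] /(equal_f^~ i) /addrI.
exact: (mulIr (hF hi)).
Qed.

Lemma line_of_sub (p v p' v' a w : nat -> F) : line_of p v a -> line_of p v w ->
  line_of p' v' a -> line_of p' v' w -> a <> w ->
  forall z, line_of p' v' z -> line_of p v z.
Proof.
move=> [t1 Ha1] [t2 Hw1] [s1 Ha2] [s2 Hw2] naw z [s ->].
have ns : s2 - s1 != 0.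
  by rewrite subr_eq0; apply/eqP => E; apply: naw; rewrite Ha2 Hw2 E.
exists (t1 + (s - s1) * ((s2 - s1)^-1 * (t2 - t1))).
apply: functional_extensionality => i; apply: affine_coord_change; first exact: hF.
- exact: (equal_f (etrans (esym Ha1) Ha2) i).
- exact: (equal_f (etrans (esym Hw1) Hw2) i).
Qed.

Lemma line_of_eq (p v p' v' a w : nat -> F) : line_of p v a -> line_of p v w ->
  line_of p' v' a -> line_of p' v' w -> a <> w ->
  forall z, line_of p v z <-> line_of p' v' z.
Proof.
move=> h1 h2 h3 h4 naw z; split.
- exact: (line_of_sub h3 h4 h1 h2 naw).
- exact: (line_of_sub h1 h2 h3 h4 naw).
Qed.

End Lines.

Section Points.

Variables (F : unitRingType) (m : affdim).

Lemma isPt_line_of (p v : nat -> F) t :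
  isPt m p -> isPt m v -> isPt m (fun i => p i + t * v i).
Proof.
move=> [[N1 h1] d1] [[N2 h2] d2]; split.
  exists (maxn N1 N2) => i; rewrite geq_max => /andP [hi1 hi2].
  by rewrite h1 // h2 // mulr0 addr0.
by move=> k hk i hi; rewrite (d1 k hk i hi) (d2 k hk i hi) mulr0 addr0.
Qed.

Lemma isPt_sub (p q : nat -> F) : isPt m p -> isPt m q -> isPt m (fun i => q i - p i).
Proof.
move=> hp hq; have := isPt_line_of (-1) hq hp.
by congr isPt; apply: functional_extensionality => i; rewrite mulN1r.
Qed.

Lemma isLine_line_of (p v : nat -> F) :
  isPt m p -> isPt m v -> v <> (fun _ => 0) -> isLine m (line_of p v).
Proof. by move=> *; exists p, v. Qed.

Lemma isLine_through (p q : nat -> F) :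
  isPt m p -> isPt m q -> p <> q -> isLine m (line_through p q).
Proof.
move=> hp hq npq; apply: isLine_line_of => //; first exact: isPt_sub.
move/equal_f => E; apply: npq; apply: functional_extensionality => i.
by apply/eqP; rewrite eq_sym -subr_eq0 E.
Qed.

Lemma isLine_point (l : (nat -> F) -> Prop) : isLine m l -> exists p, l p.
Proof. by move=> [p [v [_ [_ [_ hl]]]]]; exists p; apply/hl; apply: line_of_base. Qed.

Definition coord_ok (i : nat) : bool := if m is Some k then (i < k)%N else true.

Definition coord_vec (k : nat) (s : F) : nat -> F := fun i => if i == k then s else 0.

Lemma coord_vec_pt k s : coord_ok k -> isPt m (coord_vec k s).
Proof.
rewrite /coord_ok /coord_vec => hk; split.
  by exists k.+1 => i hi; case: eqP => // E; rewrite E ltnn in hi.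
by move=> d hd i hi; case: eqP => // E; move: hk; rewrite hd -E ltnNge hi.
Qed.

End Points.

Lemma F2_cases (t : 'F_2) : t = 0 \/ t = 1.
Proof. by case: t => [[|[|n]] Hn]; [left|right|]; rewrite // ; apply: val_inj. Qed.

Lemma F2_line_of (p v : nat -> 'F_2) x :
  line_of p v x <-> x = p \/ x = (fun i => p i + v i).
Proof.
split.
  move=> [t ->]; case: (F2_cases t) => ->; [left|right];
  by apply: functional_extensionality => i; rewrite ?mul0r ?addr0 ?mul1r.
case=> ->; first exact: line_of_base.
by exists 1; apply: functional_extensionality => i; rewrite mul1r.
Qed.

Lemma F2_line_through (p q : nat -> 'F_2) x : line_through p q x <-> x = p \/ x = q.
Proof.
rewrite /line_through F2_line_of; have -> // : (fun i => p i + (q i - p i)) = q.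
by apply: functional_extensionality => i; rewrite addrC subrK.
Qed.

Lemma F2_line_pair (a : (nat -> 'F_2) -> Prop) p : isLine None a -> a p ->
  exists r, [/\ r <> p, isPt None p, isPt None r & forall x, a x <-> x = p \/ x = r].
Proof.
move=> [p0 [v [hp0 [hv [nv ha]]]]] /ha hp.
have hpp : isPt None p by case: hp => t ->; exact: isPt_line_of.
exists (fun i => p i + v i); split => //.
- move/equal_f => E; apply: nv; apply: functional_extensionality => i.
  by apply: (@addrI _ (p i)); rewrite addr0 E.
- have := isPt_line_of 1 hpp hv; congr isPt.
  by apply: functional_extensionality => i; rewrite mul1r.
- move=> x; rewrite ha; change (line_of p0 v x <-> x = p \/ x = (fun i => p i + v i)).
  by rewrite -(line_of_rebase hp) F2_line_of.
Qed.

Definition bits_point (n : nat) : nat -> 'F_2 := fun i => (Nat.testbit n i)%:R.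

Lemma testbit_ge n i : (n <= i)%N -> Nat.testbit n i = false.
Proof.
case: n => [|n] h; first exact: Nat.bits_0.
by apply: Nat.bits_above_log2; have := Nat.log2_lt_lin n.+1; lia.
Qed.

Lemma testbit_add_double (b : bool) n i :
  Nat.testbit (b + n.*2) i = if i is i'.+1 then Nat.testbit n i' else b.
Proof.
have -> : (b + n.*2 = if b then (2 * n + 1)%coq_nat else (2 * n)%coq_nat)%N by case: b; lia.
case: b i => [] [|i].
- exact: Nat.testbit_odd_0.
- exact: Nat.testbit_odd_succ (Nat.le_0_l i).
- exact: Nat.testbit_even_0.
- exact: Nat.testbit_even_succ (Nat.le_0_l i).
Qed.

Lemma bits_point_pt n : isPt None (bits_point n).
Proof. by split => //; exists n => i hi; rewrite /bits_point testbit_ge. Qed.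

Lemma bits_point_inj : injective bits_point.
Proof.
move=> n n' E; apply: Nat.bits_inj => i.
have := equal_f E i; rewrite /bits_point.
by case: (Nat.testbit n i); case: (Nat.testbit n' i) => // /eqP;
  rewrite ?oner_eq0 // eq_sym oner_eq0.
Qed.

Lemma bits_point_surj (p : nat -> 'F_2) : isPt None p -> exists n, bits_point n = p.
Proof.
move=> [[N hN] _]; elim: N p hN => [|N IH] p hN.
  by exists 0%N; apply: functional_extensionality => i; rewrite /bits_point Nat.bits_0 hN.
have [n hn] := IH (fun i => p i.+1) (fun i hi => hN i.+1 hi).
exists (nat_of_bool (p 0%N == 1%R) + n.*2)%N; apply: functional_extensionality => i.
rewrite /bits_point testbit_add_double; case: i => [|i]; last exact: equal_f hn i.
by case: (F2_cases (p 0%N)) => ->.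
Qed.

Definition point_index (p : nat -> 'F_2) : nat :=
  epsilon (inhabits 0%N) (fun n => bits_point n = p).

Lemma point_indexK p : isPt None p -> bits_point (point_index p) = p.
Proof. by move=> /bits_point_surj hp; apply: (epsilon_spec _ _ hp). Qed.

Lemma bits_pointK n : point_index (bits_point n) = n.
Proof. by apply: bits_point_inj; rewrite point_indexK //; apply: bits_point_pt. Qed.

Definition at_most_one (T : Type) (P : T -> Prop) := forall t1 t2, P t1 -> P t2 -> t1 = t2.

Section Countable.

Variables (T : Type) (e : nat -> T) (g : T -> nat).
Hypothesis eK : cancel e g.

Lemma exists_not_In (s : seq T) : exists t, ~ List.In t s.
Proof.
suff [k hk] : exists k, forall x, List.In x s -> (g x < k)%N.
  by exists (e k) => /hk; rewrite eK ltnn.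
elim: s => [|y s [k hk]]; first by exists 0%N.
exists (maxn (g y).+1 k) => x /= [<- | /hk hx]; rewrite leq_max ?ltnSn //.
by rewrite hx orbT.
Qed.

Lemma exists_avoid_at_most_one (Ps : seq (T -> Prop)) :
  (forall P, List.In P Ps -> at_most_one P) -> exists t, forall P, List.In P Ps -> ~ P t.
Proof.
move=> hPs; have [t ht] := exists_not_In (List.map (fun P => epsilon (inhabits (e 0%N)) P) Ps).
exists t => P hP Pt; apply: ht.
have -> : t = epsilon (inhabits (e 0%N)) P.
  by apply: (hPs P hP) => //; apply: epsilon_spec; exists t.
exact: List.in_map.
Qed.

End Countable.

Section Arc.

Variables (F : unitRingType) (m : affdim).
Hypothesis hF : skew_field F.
Variables (e : nat -> F) (g : F -> nat).
Hypotheses (eK : cancel e g) (gK : cancel g e).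
(* Dimension at least 2: a second coordinate is all the construction needs. *)
Hypothesis coord1 : coord_ok m 1.

Let coord0 : coord_ok m 0.
Proof. by move: coord1; rewrite /coord_ok; case: m => // k /ltnW. Qed.

Definition two_on (L : (nat -> F) -> Prop) (B : seq (nat -> F)) :=
  exists x y, [/\ x <> y, List.In x B, List.In y B, L x & L y].

Definition open_line (B : seq (nat -> F)) (pv : (nat -> F) * (nat -> F)) :=
  [/\ isPt m pv.1, isPt m pv.2, pv.2 <> (fun _ => 0) & ~ two_on (line_of pv.1 pv.2) B].

Definition fresh_point (B : seq (nat -> F)) (pv : (nat -> F) * (nat -> F)) z :=
  [/\ line_of pv.1 pv.2 z, isPt m z, ~ List.In z B &
      forall x y, List.In x B -> List.In y B -> x <> y -> ~ line_through x y z].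

Lemma exists_fresh_point B pv : open_line B pv -> exists z, fresh_point B pv z.
Proof.
case: pv => p v [/= hp hv nv nt].
pose f t := fun i => p i + t * v i.
have onf t : line_of p v (f t) by exists t.
pose Ps := List.map (fun x t => f t = x) B ++
  List.flat_map (fun x => List.map (fun y t => x <> y /\ line_through x y (f t)) B) B.
have uniqPs : forall P, List.In P Ps -> at_most_one P.
  move=> P /List.in_app_iff [/List.in_map_iff [x [<- _]] |
     /List.in_flat_map [x [hx /List.in_map_iff [y [<- hy]]]]] t1 t2 /=.
    by move=> h1 h2; exact: (line_param_inj hF nv (etrans h1 (esym h2))).
  move=> [nxy h1] [_ h2]; apply: NNPP => nt12; apply: nt.
  have nf : f t1 <> f t2 by move/(line_param_inj hF nv).
  have sub := line_of_sub hF (onf t1) (onf t2) h1 h2 nf.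
  by exists x, y; split => //; apply: sub; [apply: line_through_l | apply: line_through_r].
have [t ht] := exists_avoid_at_most_one eK uniqPs.
exists (f t); split => //; first exact: isPt_line_of.
  move=> hin; apply: (ht (fun t' => f t' = f t)) => //.
  by apply: List.in_or_app; left; apply: (List.in_map (fun x t' => f t' = x)).
move=> x y hx hy nxy hl; apply: (ht (fun t' => x <> y /\ line_through x y (f t'))) => //.
apply: List.in_or_app; right; apply/List.in_flat_map; exists x; split => //.
exact: (List.in_map (fun y t' => x <> y /\ line_through x y (f t'))).
Qed.

Definition decode_point (s : seq nat) : nat -> F := fun i => nth 0 (map e s) i.

Lemma decode_point_surj q : isPt m q -> exists s, decode_point s = q.
Proof.
move=> [[N hN] _]; exists (map (g \o q) (iota 0 N)).
apply: functional_extensionality => i; rewrite /decode_point -map_comp.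
rewrite (eq_map (g := q)); last by move=> j /=; rewrite gK.
case: (ltnP i N) => hi; first by rewrite (nth_map 0%N) ?size_iota // nth_iota.
by rewrite nth_default ?size_map ?size_iota // hN.
Qed.

(* The boolean tag codes every pair (point, direction) twice: the first visit of a line
   puts a point of the arc on it, the second visit a second one. *)
Definition line_code (n : nat) : (nat -> F) * (nat -> F) :=
  if (unpickle n : option (seq nat * seq nat * bool)) is Some (s1, s2, _)
  then (decode_point s1, decode_point s2) else (fun _ => 0, fun _ => 0).

Lemma line_code_twice p v : isPt m p -> isPt m v ->
  exists n1 n2, [/\ (n1 < n2)%N, line_code n1 = (p, v) & line_code n2 = (p, v)].
Proof.
move=> /decode_point_surj [s1 <-] /decode_point_surj [s2 <-].
have code (c : bool) : line_code (pickle (s1, s2, c)) = (decode_point s1, decode_point s2).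
  by rewrite /line_code pickleK.
have neq : pickle (s1, s2, false) <> pickle (s1, s2, true) by move/(pcan_inj pickleK).
case: (ltngtP (pickle (s1, s2, false)) (pickle (s1, s2, true))) => [lt|lt|/neq //].
  by exists (pickle (s1, s2, false)), (pickle (s1, s2, true)); rewrite !code.
by exists (pickle (s1, s2, true)), (pickle (s1, s2, false)); rewrite !code.
Qed.

Lemma exists_open_line B : exists pv, open_line B pv.
Proof.
have [s hs] := exists_not_In eK (List.map (fun x => x 1%N) B).
exists (coord_vec 1 s, coord_vec 0 1); split => /=.
- exact: coord_vec_pt.
- exact: coord_vec_pt.
- by move/(equal_f^~ 0%N); rewrite /coord_vec /=; apply/eqP; rewrite oner_eq0.
- move=> [x [_ [_ hx _ [t Ex] _]]]; apply: hs.
  have := List.in_map (fun x => x 1%N) _ _ hx; rewrite Ex /coord_vec /=.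
  by rewrite mulr0 addr0.
Qed.

Definition target (B : seq (nat -> F)) (n : nat) : (nat -> F) * (nat -> F) :=
  if excluded_middle_informative (open_line B (line_code n)) then line_code n
  else epsilon (inhabits (line_code n)) (open_line B).

Lemma target_open B n : open_line B (target B n).
Proof.
rewrite /target; destruct (excluded_middle_informative _) as [h|h]; first exact: h.
exact: epsilon_spec (exists_open_line B).
Qed.

Definition next_point (B : seq (nat -> F)) (n : nat) : nat -> F :=
  epsilon (inhabits (fun _ => 0)) (fresh_point B (target B n)).

Fixpoint arc_prefix (n : nat) : seq (nat -> F) :=
  if n is n'.+1 then rcons (arc_prefix n') (next_point (arc_prefix n') n') else [::].

Definition arc (n : nat) : nat -> F := next_point (arc_prefix n) n.

Lemma arc_fresh n : fresh_point (arc_prefix n) (target (arc_prefix n) n) (arc n).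
Proof. exact: epsilon_spec (exists_fresh_point (target_open _ _)). Qed.

Lemma In_arc_prefix n x : List.In x (arc_prefix n) <-> exists2 i, (i < n)%N & x = arc i.
Proof.
elim: n => [|n IH] /=; first by split => // -[].
rewrite -cats1 List.in_app_iff IH /=; split.
  by case=> [[i hi ->]|[<-|[]]]; [exists i => //; apply: ltnW | exists n].
move=> [i]; rewrite ltnS leq_eqVlt => /orP [/eqP -> ->|hi ->]; first by right; left.
by left; exists i.
Qed.

Lemma arc_pt n : isPt m (arc n).
Proof. by case: (arc_fresh n). Qed.

Lemma arc_inj : injective arc.
Proof.
have new i j : (i < j)%N -> arc i <> arc j.
  by move=> hij E; case: (arc_fresh j) => _ _ + _; apply; apply/In_arc_prefix; exists i.
by move=> i j E; case: (ltngtP i j) => // /new; [|move/nesym]; move/(_ E).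
Qed.

Lemma arc_off_line l i j k : isLine m l -> (i < k)%N -> (j < k)%N -> i <> j ->
  l (arc i) -> l (arc j) -> ~ l (arc k).
Proof.
move=> [p [v [_ [_ [_ hl]]]]] ik jk nij /hl li /hl lj /hl lk.
have nij' : arc i <> arc j by move/arc_inj.
have sub := line_of_sub hF (line_through_l _ _) (line_through_r _ _) li lj nij'.
case: (arc_fresh k) => _ _ _ /(_ (arc i) (arc j)); apply => //; last exact: sub.
- by apply/In_arc_prefix; exists i.
- by apply/In_arc_prefix; exists j.
Qed.

Lemma arc_collinear l i j k : isLine m l -> l (arc i) -> l (arc j) -> l (arc k) ->
  [\/ i = j, i = k | j = k].
Proof.
move=> hl li lj lk.
case: (eqVneq i j) => [|/eqP nij]; first by constructor 1.
case: (eqVneq i k) => [|/eqP nik]; first by constructor 2.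
case: (eqVneq j k) => [|/eqP njk]; first by constructor 3.
exfalso; have off := arc_off_line hl.
have [ik|ki|/nik //] := ltngtP i k.
- have [jk|kj|/njk //] := ltngtP j k.
  + exact: (off i j k ik jk nij li lj lk).
  + exact: (off i k j (ltn_trans ik kj) kj nik li lk lj).
- have [ij|ji|/nij //] := ltngtP i j.
  + exact: (off k i j (ltn_trans ki ij) ij (nesym nik) lk li lj).
  + exact: (off j k i ji ki njk lj lk li).
Qed.

Lemma arc_prefix_mono a b x : (a <= b)%N ->
  List.In x (arc_prefix a) -> List.In x (arc_prefix b).
Proof.
move=> ab /In_arc_prefix [i hi ->]; apply/In_arc_prefix.
by exists i => //; apply: leq_trans ab.
Qed.

Lemma arc_on_coded_line n : open_line (arc_prefix n) (line_code n) ->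
  line_of (line_code n).1 (line_code n).2 (arc n).
Proof.
case: (arc_fresh n); rewrite /target.
by destruct (excluded_middle_informative _) as [h|h].
Qed.

Lemma line_meets_arc_twice l : isLine m l ->
  exists i j, [/\ i <> j, l (arc i) & l (arc j)].
Proof.
move=> [p [v [hp [hv [nv hl]]]]].
have [n1 [n2 [lt12 c1 c2]]] := line_code_twice hp hv.
case: (classic (two_on (line_of p v) (arc_prefix n2))) => [[x [y [nxy hx hy lx ly]]] | nt2].
  move/In_arc_prefix: hx lx nxy => [i _ ->] li; move/In_arc_prefix: hy ly => [j _ ->] lj nij.
  by exists i, j; split; [move=> E; apply: nij; rewrite E | apply/hl | apply/hl].
have nt1 : ~ two_on (line_of p v) (arc_prefix n1).
  move=> [x [y [nxy hx hy lx ly]]]; apply: nt2; exists x, y.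
  by split => //; apply: arc_prefix_mono (ltnW lt12) _.
have on n : line_code n = (p, v) -> ~ two_on (line_of p v) (arc_prefix n) -> l (arc n).
  by move=> c nt; apply/hl; have := @arc_on_coded_line n; rewrite c; apply; split.
exists n1, n2; split; [by move=> E; rewrite E ltnn in lt12 | exact: on | exact: on].
Qed.

Definition lam (p : nat -> 'F_2) : nat -> F := arc (point_index p).

Definition arc_set (q : nat -> F) : Prop := exists n, q = arc n.

Definition phi (a : (nat -> 'F_2) -> Prop) : (nat -> F) -> Prop :=
  fun w => exists p q, [/\ a p, a q, p <> q & line_through (lam p) (lam q) w].

Lemma lam_pt p : isPt m (lam p).
Proof. exact: arc_pt. Qed.

Lemma lam_inj p1 p2 : isPt None p1 -> isPt None p2 -> lam p1 = lam p2 -> p1 = p2.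
Proof. by move=> h1 h2 /arc_inj E; rewrite -(point_indexK h1) -(point_indexK h2) E. Qed.

Lemma lam_bits_point n : lam (bits_point n) = arc n.
Proof. by rewrite /lam bits_pointK. Qed.

Lemma arc_setE q : arc_set q <-> exists p, isPt None p /\ q = lam p.
Proof.
split; last by move=> [p [_ ->]]; exists (point_index p).
move=> [n ->]; exists (bits_point n); rewrite lam_bits_point; split => //.
exact: bits_point_pt.
Qed.

Lemma arc_set_collinear l x y z : isLine m l -> l x -> l y -> l z ->
  arc_set x -> arc_set y -> arc_set z -> [\/ x = y, x = z | y = z].
Proof.
move=> hl lx ly lz [i Ex] [j Ey] [k Ez]; subst x y z.
by case: (arc_collinear hl lx ly lz) => ->; constructor.
Qed.

Lemma arc_set_meets_line l : isLine m l ->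
  exists x y, x <> y /\ l x /\ l y /\ arc_set x /\ arc_set y /\
    forall z, l z -> arc_set z -> z = x \/ z = y.
Proof.
move=> hl; have [i [j [nij li lj]]] := line_meets_arc_twice hl.
exists (arc i), (arc j).
split; first by move/arc_inj.
do 2 split => //; split; first by exists i.
split; first by exists j.
move=> z lz [k Ez]; subst z.
by case: (arc_collinear hl lz li lj) => [->|->|/nij //]; [left | right].
Qed.

Lemma lam_collinear p q x : isPt None p -> isPt None q -> isPt None x -> p <> q ->
  line_through (lam p) (lam q) (lam x) -> x = p \/ x = q.
Proof.
move=> hp hq hx npq lx.
have nl : lam p <> lam q by move/(lam_inj hp hq).
have hl := isLine_through (lam_pt p) (lam_pt q) nl.
case: (arc_collinear hl (line_through_l _ _) (line_through_r _ _) lx) => E.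
- by case: npq; apply: lam_inj; rewrite // /lam E.
- by left; apply: lam_inj; rewrite // /lam E.
- by right; apply: lam_inj; rewrite // /lam E.
Qed.

Lemma phi_pair a p q : (forall x, a x <-> x = p \/ x = q) -> p <> q ->
  forall w, phi a w <-> line_through (lam p) (lam q) w.
Proof.
move=> ha npq w; split; last by move=> hw; exists p, q; split => //; apply/ha; [left | right].
move=> [p' [q' [/ha + /ha + npq' hw]]].
by case=> Ep [] Eq; subst p' q' => //; apply/line_through_sym.
Qed.

Lemma isLine_phi a : isLine None a -> isLine m (phi a).
Proof.
move=> hA; have [p ap] := isLine_point hA.
have [r [nrp hp hr ha]] := F2_line_pair hA ap.
have nl : lam p <> lam r by move/(lam_inj hp hr) => E; apply: nrp.
have [P [V [hP [hV [nV hl]]]]] := isLine_through (lam_pt p) (lam_pt r) nl.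
exists P, V; do 3 split => //.
by move=> x; rewrite (phi_pair ha (nesym nrp)) hl.
Qed.

Lemma lam_in_phi a p : isLine None a -> a p -> phi a (lam p).
Proof.
move=> hA ap; have [r [nrp _ _ ha]] := F2_line_pair hA ap.
by apply/(phi_pair ha (nesym nrp)); apply: line_through_l.
Qed.

Lemma phi_subset a b : isLine None a -> isLine None b ->
  (forall w, phi a w -> phi b w) -> forall x, a x -> b x.
Proof.
move=> hA hB sab x ax; have [p bp] := isLine_point hB.
have [_ [_ hx _ _]] := F2_line_pair hA ax.
have [r [nrp hp hr hb]] := F2_line_pair hB bp.
have /sab/(phi_pair hb (nesym nrp)) lx := lam_in_phi hA ax.
by apply/hb; exact: (lam_collinear hp hr hx (nesym nrp) lx).
Qed.

Lemma phi_inj a b : isLine None a -> isLine None b -> phi a = phi b -> a = b.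
Proof.
move=> hA hB E; apply: functional_extensionality => x; apply: propositional_extensionality.
by split; apply: phi_subset => // w; rewrite E.
Qed.

Lemma phi_surj l : isLine m l -> exists a, isLine None a /\ phi a = l.
Proof.
move=> hl; have [i [j [nij li lj]]] := line_meets_arc_twice hl.
have nb : bits_point i <> bits_point j by move/bits_point_inj.
exists (line_through (bits_point i) (bits_point j)); split.
  exact: isLine_through (bits_point_pt i) (bits_point_pt j) nb.
apply: functional_extensionality => w; apply: propositional_extensionality.
rewrite (phi_pair (F2_line_through _ _) nb) !lam_bits_point.
have [p [v [_ [_ [_ hlv]]]]] := hl.
have li' : line_of p v (arc i) by apply/hlv.
have lj' : line_of p v (arc j) by apply/hlv.
have nij' : arc i <> arc j by move/arc_inj.
by rewrite hlv; exact: (line_of_eq hF (line_through_l _ _) (line_through_r _ _) li' lj' nij').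
Qed.

Lemma phi_meet a b p : isLine None a -> isLine None b -> adjacent a b -> a p -> b p ->
  forall q, phi a q /\ phi b q <-> q = lam p.
Proof.
move=> hA hB [_ nab] ap bp q; split; last by move=> ->; split; apply: lam_in_phi.
move=> [qa qb]; apply: NNPP => nq.
have [r [nrp hp hr ha]] := F2_line_pair hA ap.
have [r' [nr'p _ hr' hb]] := F2_line_pair hB bp.
move/(phi_pair ha (nesym nrp)): qa => qa; move/(phi_pair hb (nesym nr'p)): qb => qb.
have lr' : line_through (lam p) (lam r) (lam r').
  apply/(line_of_eq hF (line_through_l _ _) qa (line_through_l _ _) qb (nesym nq)).
  exact: line_through_r.
case: (lam_collinear hp hr hr' (nesym nrp) lr') => // Er.
apply: nab; apply: functional_extensionality => x; apply: propositional_extensionality.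
by rewrite ha hb Er.
Qed.

Lemma lam_not_surj : exists q, isPt m q /\ forall p, isPt None p -> lam p <> q.
Proof.
have h0 : isPt m (fun _ : nat => 0 : F) by split => //; exists 0%N.
have nv : coord_vec 0 (1 : F) <> (fun _ => 0).
  by move/(equal_f^~ 0%N); rewrite /coord_vec /=; apply/eqP; rewrite oner_eq0.
have hl := isLine_line_of h0 (@coord_vec_pt F m 0 1 coord0) nv.
pose z k := fun i => (fun _ : nat => 0 : F) i + e k * coord_vec 0 1 i.
have lz k : line_of (fun _ => 0) (coord_vec 0 1) (z k) by exists (e k).
have z_inj k k' : z k = z k' -> k = k' by move/(line_param_inj hF nv)/(can_inj eK).
apply: NNPP => H.
have bz k : arc_set (z k).
  apply/arc_setE; apply: NNPP => nB; apply: H; exists (z k); split.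
    exact: isPt_line_of (@coord_vec_pt F m 0 1 coord0).
  by move=> p hp E; apply: nB; exists p.
have [| |] := arc_set_collinear hl (lz 0%N) (lz 1%N) (lz 2%N) (bz 0%N) (bz 1%N) (bz 2%N);
  by move/z_inj.
Qed.

End Arc.

Theorem mainTheorem6 (F' : unitRingType) (m : affdim)
  (hF' : skew_field F') (hcount : countably_infinite F')
  (hm : if m is Some k then (3 <= k)%N else true) :
  exists phi : ((nat -> 'F_2) -> Prop) -> ((nat -> F') -> Prop),
    (forall a, isLine None a -> isLine m (phi a)) /\
    (forall a b, isLine None a -> isLine None b -> phi a = phi b -> a = b) /\
    (forall a', isLine m a' -> exists a, isLine None a /\ phi a = a') /\
    (forall a b, isLine None a -> isLine None b -> related a b ->
        related (phi a) (phi b)) /\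
    exists (lam : (nat -> 'F_2) -> (nat -> F')) (B' : (nat -> F') -> Prop),
      (forall a b p, isLine None a -> isLine None b -> adjacent a b ->
          a p -> b p ->
          forall q, (phi a q /\ phi b q) <-> q = lam p) /\
      (forall p, isPt None p -> isPt m (lam p)) /\
      (forall p1 p2, isPt None p1 -> isPt None p2 -> lam p1 = lam p2 -> p1 = p2) /\
      (exists q, isPt m q /\ forall p, isPt None p -> lam p <> q) /\
      (forall q, B' q -> isPt m q) /\
      (forall l x y z, isLine m l -> l x -> l y -> l z -> B' x -> B' y -> B' z ->
          x = y \/ x = z \/ y = z) /\
      (forall l, isLine m l -> exists x y, x <> y /\ l x /\ l y /\ B' x /\ B' y /\
          forall z, l z -> B' z -> z = x \/ z = y) /\
      (forall q, B' q <-> exists p, isPt None p /\ q = lam p).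
Proof.
have [e [g eK gK]] := hcount.
have coord1 : coord_ok m 1 by case: m hm => // k /ltnW.
exists (phi m e); split; first exact: isLine_phi.
split; first exact: phi_inj.
split; first exact: phi_surj.
split.
  by move=> a b hA hB [p [ap bp]]; exists (lam m e p); split; apply: lam_in_phi.
exists (lam m e), (arc_set m e).
split; first exact: phi_meet.
split; first by move=> p _; apply: lam_pt.
split; first exact: lam_inj.
split; first exact: lam_not_surj.
split; first by move=> q [n ->]; apply: arc_pt.
split.
  move=> l x y z hl lx ly lz hx hy hz.
  case: (arc_set_collinear hF' eK coord1 hl lx ly lz hx hy hz);
  by [left | right; left | right; right].
split; [exact: arc_set_meets_line | exact: arc_setE].
Qed.
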